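(* Let $G$ be a finite group and $N\lhd G$ such that the short exact sequence $1\to N\to G\to G/N\to1$ splits. Then $\mathcal{K}_r^S(G/N)=1$ in the Burnside ring $\Omega(G)$.
   Context: $\Omega(G)$ is the Burnside ring of $G$ (Grothendieck ring of finite $G$-sets under disjoint union and Cartesian product), with dimension homomorphism $\alpha(X)=|X|$ and regular element $r=G/\{e\}$. $S=\{G/H_1,\dots,G/H_n\}$ where $H_1,\dots,H_n$ is a full set of representatives of the conjugacy classes of subgroups of $G$. For $x\in\Omega(G)$, $S(x)=\{s\in S: s\cdot x\in\mathbb{Z}r\}$, $\mathrm{Ind}(x)=\{m\in\mathbb{Z}: s\cdot x=m r \text{ for some } s\in S(x)\}$, and $\mathcal{K}_r^S(x)=\gcd(\mathrm{Ind}(x))$ (with $\mathcal{K}_r^S(x)=\infty$ if $S(x)=\emptyset$). *)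

(* Burnside ring of a finite group, following the
   Grothendieck-ring definition: finite G-sets are finite types with a
   (right) action of G; classes [X] and [Y] agree in Omega(G) iff
   X + Z ~= Y + Z for some finite G-set Z. *)
From mathcomp Require Import all_boot all_fingroup all_algebra.
Set Implicit Arguments.
Unset Strict Implicit.
Unset Printing Implicit Defensive.

Import GroupScope.

Section Burnside.
Variable gT : finGroupType.

Definition equivariant (G : {set gT}) (T1 T2 : finType)
  (a1 : T1 -> gT -> T1) (a2 : T2 -> gT -> T2) (f : T1 -> T2) : Prop :=
  forall x g, g \in G -> f (a1 x g) = a2 (f x) g.

Definition gset_iso (G : {set gT}) (T1 T2 : finType)
  (a1 : T1 -> gT -> T1) (a2 : T2 -> gT -> T2) : Prop :=
  exists f : T1 -> T2, bijective f /\ equivariant G a1 a2 f.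

Definition sum_act (T1 T2 : finType) (a1 : T1 -> gT -> T1) (a2 : T2 -> gT -> T2)
  : T1 + T2 -> gT -> T1 + T2 :=
  fun x g => match x with inl y => inl (a1 y g) | inr z => inr (a2 z g) end.

Definition prod_act (T1 T2 : finType) (a1 : T1 -> gT -> T1) (a2 : T2 -> gT -> T2)
  : T1 * T2 -> gT -> T1 * T2 :=
  fun x g => (a1 x.1 g, a2 x.2 g).

Definition triv_act (T : finType) : T -> gT -> T := fun x _ => x.

(* The transitive G-set G/H, realised as the right cosets H x (x in G),
   with G acting by right translation. *)
Definition coset_type (G H : {set gT}) := {A : {set gT} | A \in rcosets H G}.

Definition coset_act (G H : {set gT}) : coset_type G H -> gT -> coset_type G H :=
  fun A g => insubd A (val A :* g).

(* k copies of the regular G-set r = G/{e} *)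
Definition reg_copies_act (G : {set gT}) (k : nat)
  : coset_type G 1 * 'I_k -> gT -> coset_type G 1 * 'I_k :=
  prod_act (@coset_act G 1) (@triv_act 'I_k).

Definition pospart (m : int) : nat := if m is Posz n then n else 0.
Definition negpart (m : int) : nat := if m is Negz n then n.+1 else 0.

(* [X] = m r in Omega(G), for a finite G-set X and m an integer:
   [X] + m^- [r] = m^+ [r] in the Grothendieck ring. *)
Definition eq_mult_reg (G : {set gT}) (T : finType) (a : T -> gT -> T) (m : int)
  : Prop :=
  exists (Z : finType) (az : Z -> gT -> Z), is_action G az /\
    gset_iso G (sum_act (sum_act a (@reg_copies_act G (negpart m))) az)
               (sum_act (@reg_copies_act G (pospart m)) az).

Definition conj_class_reps (G : {group gT}) (reps : {set {group gT}}) : Prop :=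
  (forall H : {group gT}, H \in reps -> H \subset G) /\
  (forall K : {group gT}, K \subset G ->
     exists! H : {group gT}, H \in reps /\ exists2 g, g \in G & K :=: H :^ g).

(* Ind(x): integers m with s.x = m r for some s = G/H, H in reps *)
Definition Ind (G : {group gT}) (reps : {set {group gT}})
  (T : finType) (a : T -> gT -> T) (m : int) : Prop :=
  exists2 H : {group gT}, H \in reps &
    eq_mult_reg G (prod_act (@coset_act G H) a) m.

Definition S_nonempty (G : {group gT}) (reps : {set {group gT}})
  (T : finType) (a : T -> gT -> T) : Prop :=
  exists m, Ind G reps a m.

(* K_r^S(x) = k  (k a natural number, i.e. S(x) nonempty and k = gcd Ind(x)) *)
Definition Kr_is (G : {group gT}) (reps : {set {group gT}})
  (T : finType) (a : T -> gT -> T) (k : nat) : Prop :=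
  [/\ S_nonempty G reps a,
      (forall m, Ind G reps a m -> ((k:int) %| m)%Z) &
      (forall d : int, (forall m, Ind G reps a m -> (d %| m)%Z) -> (d %| (k:int))%Z)].

End Burnside.

From mathcomp Require Import all_boot all_fingroup all_algebra.
From mathcomp Require Import zify.

Set Implicit Arguments.
Unset Strict Implicit.
Unset Printing Implicit Defensive.
Import GroupScope.

(* Let K be a complement of N in G and H the representative conjugate to K;
   H is again a complement of N. The G-map G -> G/H x G/N, x |-> (Hx, Nx), is
   injective because H :&: N = 1, and surjective by counting since
   |G| = |H| |N|. Hence G/H . G/N = r in Omega(G), so 1 lies in Ind(G/N) and
   the gcd is 1. *)

Section CosetSpaces.
Variable gT : finGroupType.
Implicit Types G H L N K : {group gT}.

Fact rcosets_self G H : (H : {set gT}) \in rcosets H G.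
Proof. by apply/rcosetsP; exists 1; rewrite ?rcoset1. Qed.

Definition coset_base G H : coset_type G H :=
  exist _ (H : {set gT}) (rcosets_self G H).

(* For L \subset H this is the G-map L x |-> H x; coset_base is only the
   default value required by insubd. *)
Definition coset_proj G L H (A : coset_type G L) : coset_type G H :=
  insubd (coset_base G H) (H * val A).
Arguments coset_proj {G L} H A.

Lemma card_coset_type G H : #|{: coset_type G H}| = #|G : H|.
Proof. by rewrite card_sig; apply: eq_card. Qed.

Lemma coset_act_val G H (A : coset_type G H) g :
  g \in G -> val (coset_act A g) = val A :* g.
Proof.
move=> Gg; rewrite /coset_act insubdK //.
have /rcosetsP[x Gx ->] := valP A.
by rewrite -rcosetM; apply/rcosetsP; exists (x * g); rewrite ?groupM.
Qed.

Lemma coset_proj_rcoset G L H (A : coset_type G L) x :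
  L \subset H -> x \in G -> val A = L :* x -> val (coset_proj H A) = H :* x.
Proof.
move=> sLH Gx defA.
have defHA : H * val A = H :* x by rewrite defA mulgA mulGSid.
by rewrite /coset_proj insubdK defHA //; apply/rcosetsP; exists x.
Qed.

Lemma coset_proj_equivariant G L H :
  L \subset H -> equivariant G (@coset_act gT G L) (@coset_act gT G H)
                             (@coset_proj G L H).
Proof.
move=> sLH A g Gg; apply: val_inj.
have /rcosetsP[x Gx defA] := valP A.
have defAg : val (coset_act A g) = L :* (x * g).
  by rewrite coset_act_val // defA rcosetM.
rewrite (coset_proj_rcoset _ (groupM Gx Gg) defAg) // coset_act_val //.
by rewrite (coset_proj_rcoset _ Gx defA) // rcosetM.
Qed.

Lemma coset_proj_pair_inj G L H N :
  L \subset H -> L \subset N -> H :&: N \subset L ->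
  injective (fun A : coset_type G L => (coset_proj H A, coset_proj N A)).
Proof.
move=> sLH sLN sHNL A B [eqH eqN]; apply: val_inj.
have /rcosetsP[x Gx defA] := valP A.
have /rcosetsP[y Gy defB] := valP B.
move: eqH eqN => /(congr1 val) eqH /(congr1 val) eqN.
rewrite (coset_proj_rcoset _ Gx defA) // (coset_proj_rcoset _ Gy defB) // in eqH.
rewrite (coset_proj_rcoset _ Gx defA) // (coset_proj_rcoset _ Gy defB) // in eqN.
have xyHN : x * y^-1 \in H :&: N.
  by rewrite inE -!mem_rcoset -eqH -eqN !rcoset_refl.
rewrite defA defB; apply/rcoset_eqP.
by rewrite mem_rcoset (subsetP sHNL).
Qed.

Lemma regular_coset_pair_bij G H N :
  H \subset G -> N \subset G -> H :&: N = 1 -> (#|H| * #|N|)%N = #|G| ->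
  bijective (fun A : coset_type G 1 => (coset_proj H A, coset_proj N A)).
Proof.
move=> sHG sNG tiHN cardHN.
apply: inj_card_bij; first by apply: coset_proj_pair_inj; rewrite ?sub1G ?tiHN.
rewrite card_prod !card_coset_type indexg1.
have := Lagrange sHG; have := Lagrange sNG; have := cardG_gt0 G; nia.
Qed.

Lemma complement_conj G N K g :
  N <| G -> K \in [complements to N in G] -> g \in G ->
  (K :^ g)%G \in [complements to N in G].
Proof.
move=> nNG /complP [tiNK defG] Gg.
have NgN : N :^ g = N by apply/normP; rewrite (subsetP (normal_norm nNG)).
apply/complP; rewrite -{1 2}NgN -conjIg -conjsMg tiNK defG conjs1g.
by rewrite conjGid.
Qed.

End CosetSpaces.

Section BurnsideRing.
Variable gT : finGroupType.

Lemma gset_iso_sym (G : {set gT}) (T1 T2 : finType)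
  (a1 : T1 -> gT -> T1) (a2 : T2 -> gT -> T2) :
  gset_iso G a1 a2 -> gset_iso G a2 a1.
Proof.
case=> f [[h fK hK] eqf]; exists h; split; first by exists f.
by move=> x g Gg; apply: (can_inj fK); rewrite hK eqf // hK.
Qed.

Lemma eq_mult_reg1 (G : {group gT}) (T : finType) (a : T -> gT -> T)
  (f : coset_type G 1 -> T) :
  bijective f -> equivariant G (@coset_act gT G 1) a f -> eq_mult_reg G a 1.
Proof.
move=> bij_f eqf; exists void, (@triv_act gT void); split.
  by split=> [? []|[]].
apply: gset_iso_sym.
pose phi (y : (coset_type G 1 * 'I_1) + void) :
    ((T + (coset_type G 1 * 'I_0)) + void) :=
  match y with inl (A, _) => inl (inl (f A)) | inr v => match v with end end.
exists phi; split.
  apply: inj_card_bij.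
    case=> [[A i]|[]] [[B j]|[]] //= [/(bij_inj bij_f) ->].
    by rewrite !ord1.
  rewrite !card_sum !card_prod !card_ord card_void (bij_eq_card bij_f).
  by rewrite /= muln0 muln1 !addn0.
by case=> [[A i]|[]] g Gg //=; rewrite eqf.
Qed.

Lemma Kr_is1 (G : {group gT}) (reps : {set {group gT}})
  (T : finType) (a : T -> gT -> T) :
  Ind G reps a 1 -> Kr_is G reps a 1.
Proof. by move=> Ind1; split=> [|m _|d hd]; [exists 1%Z | exact: dvd1z | exact: hd]. Qed.

End BurnsideRing.

Theorem lemma3p4 (gT : finGroupType) (G N : {group gT})
  (reps : {set {group gT}}) :
  N <| G -> [splits G, over N] -> conj_class_reps G reps ->
  Kr_is G reps (@coset_act gT G N) 1.
Proof.
move=> nNG /splitsP [K complK] [repsG repsP].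
have sKG : K \subset G by have /complP [_ <-] := complK; apply: mulG_subr.
have [H [[Hreps [g Gg defK]] _]] := repsP K sKG.
have /complP [tiNH defG] : H \in [complements to N in G].
  have -> : H = (K :^ g^-1)%G by apply: val_inj; rewrite /= defK conjsgK.
  by rewrite complement_conj ?groupV.
apply: Kr_is1; exists H => //.
apply: (eq_mult_reg1 (f := fun A => (coset_proj H A, coset_proj N A))).
  apply: regular_coset_pair_bij; [exact: repsG | exact: normal_sub | |].
    by rewrite setIC.
  by rewrite -defG TI_cardMg // mulnC.
by move=> A x Gx; rewrite /= !coset_proj_equivariant ?sub1G.
Qed.
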